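(* Let $H=(V,E)$ be an $\alpha$-acyclic hypergraph and let $T=(E,\mathcal{E})$ be a join tree of $H$. Define \[\mathrm{MC}^H_\cap=\Big\{w\in\mathbb{R}^{\mathcal{J}^H}_{\ge 0}\ \Big|\ w(I)=1\ \forall I\in V;\ w_i-\sum_{J\in\mathcal{J}^e:\, J\ni i}w_J=0\ \forall e\in E,\ i\in I\in e;\ \sum_{J\in\mathcal{J}^e:\,J\supseteq J_0}w_J-\sum_{J\in\mathcal{J}^{e'}:\,J\supseteq J_0}w_J=0\ \forall e,e'\in E \text{ with } |e\cap e'|>1,\ J_0\in\mathcal{J}^{e\cap e'}\Big\}\] and let $\mathrm{MC}^H_T$ be the set defined by the same constraints except that the last family of equalities is imposed only for pairs with $\{e,e'\}\in\mathcal{E}$ (and $|e\cap e'|>1$, $J_0\in\mathcal{J}^{e\cap e'}$). Then $\mathrm{MC}^H_\cap=\mathrm{MC}^H_T$.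
   Context: Let $n$ be a positive integer, $[n]=\{1,\dots,n\}$. A hypergraph $H=(V,E)$ here has as vertex set $V$ a family of pairwise disjoint subsets of $[n]$, each of cardinality at least $2$, and hyperedge set $E$ consisting of subsets $e\subseteq V$ with $|e|\ge 2$. Write $L(V)=\{\{I\}: I\in V\}$. For a nonempty $e\subseteq V$, $\mathcal{J}^e$ denotes the family of sets $J\subseteq \bigcup_{I\in e} I$ with $|J\cap I|=1$ for every $I\in e$. Let $\mathcal{J}^H=\bigcup_{e\in L(V)\cup E}\mathcal{J}^e$. For $w\in\mathbb{R}^{\mathcal{J}^H}$ write $w_i=w_{\{i\}}$ and $w(A)=\sum_{i\in A}w_i$. A join tree of $H$ is a tree $T$ with node set $E$ such that for any two distinct nodes $e_1,e_2$, every node $e$ on the unique path in $T$ between them satisfies $e_1\cap e_2\subseteq e$. $H$ is $\alpha$-acyclic in the sense of Fagin; equivalently (Beeri et al.) $H$ admits a join tree. *)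

From mathcomp Require Import all_boot all_order all_algebra.
From mathcomp Require Import reals.
Set Implicit Arguments. Unset Strict Implicit. Unset Printing Implicit Defensive.
Import Order.TTheory GRing.Theory Num.Theory.
Local Open Scope ring_scope.

(* Ground set [n] is modelled as 'I_n.  Vertices are subsets of 'I_n,
   hyperedges are sets of vertices, tree nodes are hyperedges. *)
Notation vtx n := {set 'I_n}.
Notation hedge n := {set {set 'I_n}}.

Definition hypergraph (n : nat) (V : {set vtx n}) (E : {set hedge n}) : Prop :=
  (forall I, I \in V -> 2 <= #|I|)%N /\
  (forall I I', I \in V -> I' \in V -> I != I' -> [disjoint I & I']) /\
  (forall e, e \in E -> e \subset V) /\
  (forall e, e \in E -> 2 <= #|e|)%N.

Definition Jfam (n : nat) (e : hedge n) : {set vtx n} :=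
  [set J : vtx n | (J \subset cover e) && [forall I in e, #|J :&: I| == 1%N]].

Definition LV (n : nat) (V : {set vtx n}) : {set hedge n} := [set [set I] | I in V].

Definition JH (n : nat) (V : {set vtx n}) (E : {set hedge n}) : {set vtx n} :=
  \bigcup_(e in LV V :|: E) Jfam e.

Definition tpath (n : nat) (t : rel (hedge n)) (x y : hedge n) (p : seq (hedge n)) :=
  [&& path t x p, last x p == y & uniq (x :: p)].

Definition is_tree (n : nat) (E : {set hedge n}) (t : rel (hedge n)) : Prop :=
  symmetric t /\ irreflexive t /\
  (forall x y, t x y -> x \in E /\ y \in E) /\
  (forall x y, x \in E -> y \in E -> exists! p, tpath t x y p).

Definition join_tree (n : nat) (E : {set hedge n}) (t : rel (hedge n)) : Prop :=
  is_tree E t /\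
  forall e1 e2, e1 \in E -> e2 \in E -> e1 != e2 ->
    forall p, tpath t e1 e2 p ->
      forall e, e \in e1 :: p -> e1 :&: e2 \subset e.

(* alpha-acyclicity, via the Beeri et al. characterization given in the context. *)
Definition alpha_acyclic (n : nat) (E : {set hedge n}) : Prop :=
  exists t, join_tree E t.

Section MC.
Variables (R : realType) (n : nat) (V : {set vtx n}) (E : {set hedge n}).
Implicit Type w : vtx n -> R.

(* Constraints common to MC_cap and MC_T (w_i = w {i}, w(I) = sum_{i in I} w_i). *)
Definition MC_common w : Prop :=
  (forall J, J \in JH V E -> 0 <= w J) /\
  (forall I, I \in V -> \sum_(i in I) w [set i] = 1) /\
  (forall e I i, e \in E -> I \in e -> i \in I ->
     w [set i] - \sum_(J in Jfam e | i \in J) w J = 0).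

Definition consistent w (e e' : hedge n) : Prop :=
  forall J0, J0 \in Jfam (e :&: e') ->
    \sum_(J in Jfam e | J0 \subset J) w J - \sum_(J in Jfam e' | J0 \subset J) w J = 0.

Definition MC_cap w : Prop :=
  MC_common w /\
  forall e e', e \in E -> e' \in E -> (1 < #|e :&: e'|)%N -> consistent w e e'.

Definition MC_T (t : rel (hedge n)) w : Prop :=
  MC_common w /\
  forall e e', e \in E -> e' \in E -> t e e' -> (1 < #|e :&: e'|)%N -> consistent w e e'.
End MC.

(* By the join-tree property every node on the tree path from e to e' contains
   K = e ∩ e'.  Restricting a transversal of a node f to the part covered by a
   subfamily of f is again a transversal, so the marginal of w at a transversal
   of K computed in f is a sum of marginals at transversals of f ∩ g, for any
   neighbour g.  Consistency across each tree edge therefore carries the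
   marginals at transversals of K unchanged along the path from e to e'. *)
From mathcomp Require Import all_boot all_order all_algebra.
From mathcomp Require Import reals.
Set Implicit Arguments. Unset Strict Implicit. Unset Printing Implicit Defensive.
Import GRing.Theory.
Local Open Scope ring_scope.

Lemma path_last_eq (T U : Type) (e : rel T) (P : pred T) (f : T -> U) :
    (forall x y, P x -> P y -> e x y -> f x = f y) ->
  forall x p, path e x p -> all P (x :: p) -> f (last x p) = f x.
Proof.
move=> edge_eq x p; elim: p x => [//|y p IH] x /= /andP[exy pyp] /and3P[Px Py Pp].
by rewrite IH /= ?Py // (edge_eq x y).
Qed.

Section Transversals.
Variable n : nat.
Implicit Types (e f K : hedge n) (I J : vtx n).

Lemma Jfam_cover e J : J \in Jfam e -> J \subset cover e.
Proof. by rewrite inE => /andP[]. Qed.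

Lemma Jfam_card1 e J I : J \in Jfam e -> I \in e -> #|J :&: I| = 1%N.
Proof. by rewrite inE => /andP[_ /forallP/(_ I)/implyP] JI /JI/eqP. Qed.

Lemma cover_subset K f : K \subset f -> cover K \subset cover f.
Proof.
by move=> Kf; apply/bigcupsP => I IK; apply: (bigcup_max I (subsetP Kf I IK)).
Qed.

Lemma Jfam_restrict f K J : K \subset f -> J \in Jfam f -> J :&: cover K \in Jfam K.
Proof.
move=> Kf Jf; rewrite inE subsetIr; apply/forallP => I; apply/implyP => IK.
have IKc : I \subset cover K by apply: (bigcup_max I IK).
by rewrite -setIA (setIidPr IKc) (Jfam_card1 Jf (subsetP Kf I IK)).
Qed.

Lemma Jfam_restrict_eq f K J J1 : K \subset f -> J \in Jfam f ->
  J1 \in Jfam K -> J1 \subset J -> J :&: cover K = J1.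
Proof.
move=> Kf Jf J1K J1J; apply/eqP.
rewrite eqEsubset subsetI J1J (Jfam_cover J1K) !andbT.
apply/subsetP => x /setIP[xJ /bigcupP[I IK xI]].
have J1I_JI : J1 :&: I = J :&: I.
  apply/eqP; rewrite eqEcard setSI //=.
  by rewrite (Jfam_card1 J1K IK) (Jfam_card1 Jf (subsetP Kf I IK)).
by have /setIP[] : x \in J1 :&: I by rewrite J1I_JI inE xJ.
Qed.

Definition marginal (R : nmodType) (w : vtx n -> R) f J0 : R :=
  \sum_(J in Jfam f | J0 \subset J) w J.

Lemma marginal_refine (R : nmodType) (w : vtx n -> R) f K K' J0 :
    K \subset f -> K' \subset K -> J0 \in Jfam K' ->
  marginal w f J0 = \sum_(J1 in Jfam K | J0 \subset J1) marginal w f J1.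
Proof.
move=> Kf K'K J0K'.
have J0K : J0 \subset cover K.
  exact: subset_trans (Jfam_cover J0K') (cover_subset K'K).
rewrite /marginal (partition_big (fun J => J :&: cover K)
   (fun J1 => (J1 \in Jfam K) && (J0 \subset J1))) /=; last first.
  by move=> J /andP[Jf J0J]; rewrite (Jfam_restrict Kf Jf) subsetI J0J.
apply: eq_bigr => J1 /andP[J1K J0J1]; apply: eq_bigl => J.
apply/andP/andP => [[/andP[Jf _] /eqP <-] | [Jf J1J]]; first by rewrite subsetIl.
by rewrite Jf (subset_trans J0J1 J1J) (Jfam_restrict_eq Kf Jf J1K J1J).
Qed.

Lemma consistentE (R : realType) (w : vtx n -> R) e e' :
  consistent w e e' <-> {in Jfam (e :&: e'), marginal w e =1 marginal w e'}.
Proof.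
split=> cons J0 /cons; rewrite /marginal; last by move=> ->; rewrite subrr.
by move/eqP; rewrite subr_eq0 => /eqP.
Qed.

Lemma consistent_marginal (R : realType) (w : vtx n -> R) e e' K :
  K \subset e :&: e' -> consistent w e e' -> {in Jfam K, marginal w e =1 marginal w e'}.
Proof.
move=> Kee' /consistentE cons J0 J0K.
rewrite (marginal_refine w (subsetIl e e') Kee' J0K).
rewrite (marginal_refine w (subsetIr e e') Kee' J0K).
by apply: eq_bigr => J1 /andP[J1K _]; apply: cons.
Qed.

End Transversals.

Theorem lemma5p3 (R : realType) (n : nat) (V : {set {set 'I_n}})
    (E : {set {set {set 'I_n}}}) (t : rel {set {set 'I_n}}) :
  hypergraph V E -> alpha_acyclic E -> join_tree E t ->
  forall w : {set 'I_n} -> R, MC_cap V E w <-> MC_T V E t w.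
Proof.
move=> _ _ [[_ [_ [tE tpath]]] jt] w.
split=> [[common cap] | [common tcons]]; split=> // e e' eE e'E.
  by move=> _; apply: cap.
move=> ee'_gt1; have [<- | ne] := eqVneq e e'; first by move=> J0 _; rewrite subrr.
apply/consistentE => J0 J0K; set K := e :&: e' in J0K ee'_gt1.
have [p [tp _]] := tpath e e' eE e'E.
have Kp := jt e e' eE e'E ne p tp.
case/and3P: tp => pth /eqP <- _.
have edge_eq (f g : hedge n) :
    K \subset f -> K \subset g -> t f g -> marginal w f J0 = marginal w g J0.
  move=> Kf Kg tfg; have [fE gE] := tE f g tfg.
  have Kfg : K \subset f :&: g by rewrite subsetI Kf Kg.
  have fg_gt1 : (1 < #|f :&: g|)%N := leq_trans ee'_gt1 (subset_leq_card Kfg).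
  exact: (consistent_marginal Kfg (tcons f g fE gE tfg fg_gt1) J0K).
symmetry; apply: (path_last_eq (P := fun f : hedge n => K \subset f)
                                (f := marginal w^~ J0) edge_eq pth).
by apply/allP => f /Kp.
Qed.
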